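(* Let $P$ be a finite self-dual poset admitting an order-reversing involution $\kappa:P\to P$. For $I\in\mathcal J(P)$ let $I'$ be the order ideal generated by $\kappa(\max(I))$. Let $I\in\mathcal J(P)$ and $\ell\in P$, and for a rowmotion orbit $\mathcal O$ write $(\chi_\ell-\chi_{\kappa(\ell)})(\mathcal O)=\sum_{J\in\mathcal O}(\chi_\ell(J)-\chi_{\kappa(\ell)}(J))$. (1) If $I,I'\in\mathcal O$ for some rowmotion orbit $\mathcal O$, then $(\chi_\ell-\chi_{\kappa(\ell)})(\mathcal O)=0$. (2) If $I\in\mathcal O$ and $I'\in\mathcal O'$ for rowmotion orbits $\mathcal O\neq\mathcal O'$, then $\#\mathcal O=\#\mathcal O'$ and $(\chi_\ell-\chi_{\kappa(\ell)})(\mathcal O)+(\chi_\ell-\chi_{\kappa(\ell)})(\mathcal O')=0$.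
   Context: $\mathcal J(P)$ is the set of order ideals of $P$; rowmotion $\rho:\mathcal J(P)\to\mathcal J(P)$ sends $I$ to the order ideal generated by $\min(P\setminus I)$, and a rowmotion orbit is an orbit of $\rho$. For $q\in P$, $\chi_q(I)=1$ if $q\in\max(I)$ and $0$ otherwise. *)

From mathcomp Require Import all_boot all_order all_algebra.
Set Implicit Arguments. Unset Strict Implicit. Unset Printing Implicit Defensive.
Import Order.TTheory GRing.Theory Num.Theory.
Local Open Scope order_scope.

Section Rowmotion.
Context {d : Order.disp_t} {P : finPOrderType d}.

Definition is_order_ideal (I : {set P}) : bool :=
  [forall x in I, forall y : P, (y <= x) ==> (y \in I)].

Definition maxs (A : {set P}) : {set P} :=
  [set x in A | [forall y in A, (x <= y) ==> (y == x)]].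
Definition mins (A : {set P}) : {set P} :=
  [set x in A | [forall y in A, (y <= x) ==> (y == x)]].

Definition ideal_gen (A : {set P}) : {set P} :=
  [set y : P | [exists x in A, y <= x]].

Definition rowmotion (I : {set P}) : {set P} := ideal_gen (mins (~: I)).

Definition rorbit (I : {set P}) : {set {set P}} :=
  [set J | fconnect rowmotion I J].

Definition is_rorbit (O : {set {set P}}) : Prop :=
  exists2 J, is_order_ideal J & O = rorbit J.

Definition chi (q : P) (I : {set P}) : int := (q \in maxs I)%:Z.

Definition chi_diff_sum (l kl : P) (O : {set {set P}}) : int :=
  (\sum_(J in O) (chi l J - chi kl J))%R.

End Rowmotion.

From mathcomp Require Import all_boot all_order all_algebra.
Import Order.TTheory GRing.Theory Num.Theory.

Set Implicit Arguments.
Unset Strict Implicit.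
Unset Printing Implicit Defensive.

(* The map I |-> I' is an involution on order ideals, and it conjugates
   rowmotion to its inverse: rho (rho I)' = I'.  Hence it maps the orbit of I
   bijectively onto the orbit of I'.  Since max (I') = kappa (max I), it turns
   chi_l into chi_(kappa l), so it negates the sum of chi_l - chi_(kappa l)
   over an orbit.  If I and I' share an orbit this sum equals its own
   opposite; otherwise the two orbits have opposite sums. *)

Local Open Scope order_scope.

Section OrderIdeals.
Context {d : Order.disp_t} {P : finPOrderType d}.
Implicit Types (A I J K : {set P}) (x y : P).

Definition antichain A := {in A &, forall x y, x <= y -> x = y}.

Lemma order_idealP I :
  reflect (forall x y, x \in I -> y <= x -> y \in I) (is_order_ideal I).
Proof.
apply: (iffP forallP) => [idI x y xI yx | idI x].
  by have /implyP/(_ xI)/forallP/(_ y)/implyP := idI x; apply.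
by apply/implyP => xI; apply/forallP => y; apply/implyP; apply: idI.
Qed.

Lemma maxsP A x :
  reflect (x \in A /\ forall y, y \in A -> x <= y -> y = x) (x \in maxs A).
Proof.
rewrite inE; apply: (iffP andP) => -[xA xmax]; split=> //.
  by move=> y yA xy; have /implyP/(_ yA)/implyP/(_ xy)/eqP := forallP xmax y.
by apply/forall_inP => y yA; apply/implyP => xy; rewrite (xmax y).
Qed.

Lemma ideal_gen_order_ideal A : is_order_ideal (ideal_gen A).
Proof.
apply/order_idealP => x y; rewrite !inE => /exists_inP[z zA xz] yx.
by apply/exists_inP; exists z; rewrite ?(le_trans yx xz).
Qed.

Lemma maxs_antichain A : antichain (maxs A).
Proof. by move=> x y /maxsP[_ xmax] /maxsP[yA _] /(xmax y yA). Qed.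

(* Maximise the number of elements strictly below y among the y >= x in A:
   a strictly larger element of A would have strictly more. *)
Lemma exists_maxs A x : x \in A -> exists2 y, y \in maxs A & x <= y.
Proof.
move=> xA; pose below y := #|[set z | z < y]|.
have x_above_x : (x \in A) && (x <= x) by rewrite xA lexx.
have [y /andP[yA xy] ymax] :=
  @arg_maxnP _ x (fun y => (y \in A) && (x <= y)) below x_above_x.
exists y => //; apply/maxsP; split=> // z zA yz; apply/eqP/negPn/negP => zy.
have yz_strict : y < z by rewrite lt_def zy.
have below_proper : [set w | w < y] \proper [set w | w < z].
  apply/properP; split; last by exists y; rewrite !inE ?ltxx.
  by apply/subsetP => w; rewrite !inE => /lt_trans; apply.
have := ymax z; rewrite zA (le_trans xy yz) => /(_ isT) /=.
by rewrite leqNgt (proper_card below_proper).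
Qed.

Lemma maxs_ideal_gen A : antichain A -> maxs (ideal_gen A) = A.
Proof.
move=> antiA; apply/setP => x; apply/maxsP/idP => [[]|xA].
  rewrite inE => /exists_inP[y yA xy] xmax.
  by rewrite -(xmax y) // inE; apply/exists_inP; exists y.
split=> [|y]; first by rewrite inE; apply/exists_inP; exists x.
rewrite inE => /exists_inP[z zA yz] xy.
have xz : x = z by apply: antiA; rewrite ?(le_trans xy yz).
by apply/eqP; rewrite eq_le xy xz yz.
Qed.

Lemma ideal_gen_maxs I : is_order_ideal I -> ideal_gen (maxs I) = I.
Proof.
move=> /order_idealP idI; apply/setP => x; rewrite inE.
apply/exists_inP/idP => [[y /maxsP[yI _] /(idI y x yI)] // | /exists_maxs[y]].
by exists y.
Qed.

End OrderIdeals.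

Section MinimalElements.
Context {d : Order.disp_t} {P : finPOrderType d}.
Implicit Types (A I : {set P}) (x y : P).

Lemma mins_dual A : mins A = @maxs _ P^d A.
Proof. by apply/setP => x; rewrite !inE. Qed.

Lemma minsP A x :
  reflect (x \in A /\ forall y, y \in A -> y <= x -> y = x) (x \in mins A).
Proof. by rewrite mins_dual; apply: (@maxsP _ P^d). Qed.

Lemma mins_antichain A : antichain (mins A).
Proof.
by rewrite mins_dual => x y xm ym xy; apply/esym/(@maxs_antichain _ P^d A y x).
Qed.

Lemma order_ideal_setC I : is_order_ideal I -> @is_order_ideal _ P^d (~: I).
Proof.
move=> /order_idealP idI; apply/order_idealP => x y; rewrite !inE => xI xy.
by apply: contra xI => yI; apply: idI yI xy.
Qed.

End MinimalElements.

Section RowmotionOrbits.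
Context {d : Order.disp_t} {P : finPOrderType d}.
Implicit Types (I J K : {set P}) (O : {set {set P}}).

Lemma rowmotion_order_ideal I : is_order_ideal (rowmotion I).
Proof. exact: ideal_gen_order_ideal. Qed.

Lemma maxs_rowmotion I : maxs (rowmotion I) = mins (~: I).
Proof. exact/maxs_ideal_gen/mins_antichain. Qed.

(* rho I determines min (P \ I), which generates the up-set P \ I. *)
Lemma rowmotion_inj : {in is_order_ideal &, injective (@rowmotion _ P)}.
Proof.
move=> I J idI idJ eqIJ; apply: setC_inj.
have eq_mins : mins (~: I) = mins (~: J) by rewrite -!maxs_rowmotion eqIJ.
rewrite -(@ideal_gen_maxs _ P^d _ (order_ideal_setC idI)).
by rewrite -(@ideal_gen_maxs _ P^d _ (order_ideal_setC idJ)) -!mins_dual eq_mins.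
Qed.

Lemma iter_rowmotion_order_ideal n I :
  is_order_ideal I -> is_order_ideal (iter n rowmotion I).
Proof. by case: n => // n _; apply: rowmotion_order_ideal. Qed.

Lemma rorbit_order_ideal I :
  is_order_ideal I -> {subset rorbit I <= is_order_ideal}.
Proof.
move=> idI K; rewrite inE => /iter_findex <-.
exact: iter_rowmotion_order_ideal.
Qed.

Lemma fconnect_rowmotion_sym I J : is_order_ideal I -> is_order_ideal J ->
  fconnect rowmotion I J = fconnect rowmotion J I.
Proof.
have homo_ideal : {homo @rowmotion _ P : K / K \in is_order_ideal}.
  by move=> K _; apply: rowmotion_order_ideal.
exact: fconnect_sym_in homo_ideal rowmotion_inj I J.
Qed.

Lemma is_rorbitE O K : is_rorbit O -> K \in O -> O = rorbit K.
Proof.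
move=> [I idI ->] IK; have idK := rorbit_order_ideal idI IK.
move: IK; rewrite inE => IK; apply/setP => J; rewrite !inE.
apply/idP/idP => [IJ | KJ]; last exact: connect_trans KJ.
by apply: connect_trans IJ; rewrite fconnect_rowmotion_sym.
Qed.

End RowmotionOrbits.

Section SelfDualPoset.
Context {d : Order.disp_t} {P : finPOrderType d}.
Variable kappa : P -> P.
Hypothesis kappaK : involutive kappa.
Hypothesis kappa_rev : forall x y, x <= y -> kappa y <= kappa x.
Implicit Types (A I J K : {set P}) (O : {set {set P}}) (x y : P).

Lemma mem_imset_kappa A x : (x \in kappa @: A) = (kappa x \in A).
Proof. by rewrite (can2_imset_pre _ kappaK kappaK) inE. Qed.

Lemma imset_kappaK A : kappa @: (kappa @: A) = A.
Proof. by apply/setP => x; rewrite !mem_imset_kappa kappaK. Qed.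

Lemma le_kappa x y : (kappa x <= kappa y) = (y <= x).
Proof. by apply/idP/idP => /kappa_rev //; rewrite !kappaK. Qed.

Lemma maxs_kappa A : maxs (kappa @: A) = kappa @: mins A.
Proof.
apply/setP => x; rewrite mem_imset_kappa.
apply/maxsP/minsP => -[]; rewrite mem_imset_kappa => xA xmax; split=> // y.
  move=> yA ykx; apply: (can_inj kappaK); rewrite kappaK.
  by apply: xmax; rewrite ?mem_imset_kappa ?kappaK // -le_kappa kappaK.
rewrite mem_imset_kappa => kyA xy; rewrite -[y]kappaK -[x]kappaK.
by congr kappa; apply: xmax; rewrite //= -le_kappa !kappaK.
Qed.

Lemma mins_kappa A : mins (kappa @: A) = kappa @: maxs A.
Proof. by rewrite -{2}(imset_kappaK A) maxs_kappa imset_kappaK. Qed.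

Definition dual_ideal K := ideal_gen (kappa @: maxs K).

Lemma maxs_dual_ideal K : maxs (dual_ideal K) = kappa @: maxs K.
Proof.
by rewrite /dual_ideal -mins_kappa; apply/maxs_ideal_gen/mins_antichain.
Qed.

Lemma dual_idealK : {in is_order_ideal, involutive dual_ideal}.
Proof.
move=> K idK.
by rewrite {1}/dual_ideal maxs_dual_ideal imset_kappaK ideal_gen_maxs.
Qed.

Lemma dual_ideal_inj : {in is_order_ideal &, injective dual_ideal}.
Proof. exact: can_in_inj dual_idealK. Qed.

Lemma dual_ideal_order_ideal K : is_order_ideal (dual_ideal K).
Proof. exact: ideal_gen_order_ideal. Qed.

Lemma chi_dual_ideal q K : chi q (dual_ideal K) = chi (kappa q) K.
Proof. by rewrite /chi maxs_dual_ideal mem_imset_kappa. Qed.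

Lemma order_ideal_imset_kappa_setC I :
  is_order_ideal I -> is_order_ideal (kappa @: ~: I).
Proof.
move=> /order_idealP idI; apply/order_idealP => x y.
rewrite !mem_imset_kappa !inE => kxI yx; apply: contra kxI => kyI.
by apply: idI kyI _; rewrite le_kappa.
Qed.

Lemma dual_ideal_rowmotion I :
  is_order_ideal I -> dual_ideal (rowmotion I) = ~: (kappa @: I).
Proof.
move=> idI; rewrite /dual_ideal maxs_rowmotion -maxs_kappa.
rewrite ideal_gen_maxs ?order_ideal_imset_kappa_setC //.
by apply/setP => x; rewrite !(inE, mem_imset_kappa).
Qed.

Lemma rowmotion_dual_ideal_rowmotion I :
  is_order_ideal I -> rowmotion (dual_ideal (rowmotion I)) = dual_ideal I.
Proof.
by move=> idI; rewrite dual_ideal_rowmotion // /rowmotion setCK mins_kappa.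
Qed.

Lemma iter_rowmotion_dual_ideal n I : is_order_ideal I ->
  iter n rowmotion (dual_ideal (iter n rowmotion I)) = dual_ideal I.
Proof.
move=> idI; elim: n => // n IHn.
rewrite iterSr iterS rowmotion_dual_ideal_rowmotion //.
exact: iter_rowmotion_order_ideal.
Qed.

Lemma dual_ideal_fconnect I J : is_order_ideal I -> fconnect rowmotion I J ->
  fconnect rowmotion (dual_ideal I) (dual_ideal J).
Proof.
move=> idI /iter_findex <-; set n := findex _ _ _.
rewrite fconnect_rowmotion_sym ?dual_ideal_order_ideal //.
by rewrite -(iter_rowmotion_dual_ideal n idI) fconnect_iter.
Qed.

Lemma dual_ideal_rorbit I :
  is_order_ideal I -> dual_ideal @: rorbit I = rorbit (dual_ideal I).
Proof.
move=> idI; apply/setP => J; rewrite [in RHS]inE.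
apply/imsetP/idP => [[K] | dIJ].
  by rewrite inE => IK ->; apply: dual_ideal_fconnect.
have idJ : is_order_ideal J.
  by apply: (rorbit_order_ideal (dual_ideal_order_ideal I)); rewrite inE.
exists (dual_ideal J); last by rewrite dual_idealK.
rewrite inE -(dual_idealK idI).
exact: dual_ideal_fconnect (dual_ideal_order_ideal I) dIJ.
Qed.

Lemma card_dual_ideal_imset O :
  {subset O <= is_order_ideal} -> #|dual_ideal @: O| = #|O|.
Proof.
move=> idO; apply: card_in_imset => J K /idO idJ /idO idK.
exact: dual_ideal_inj.
Qed.

Lemma chi_diff_sum_dual_ideal l O : {subset O <= is_order_ideal} ->
  chi_diff_sum l (kappa l) (dual_ideal @: O) = (- chi_diff_sum l (kappa l) O)%R.
Proof.
move=> idO; rewrite /chi_diff_sum big_imset /=; last first.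
  by move=> J K /idO idJ /idO idK; apply: dual_ideal_inj.
rewrite -sumrN; apply: eq_bigr => K _.
by rewrite !chi_dual_ideal kappaK opprB.
Qed.

End SelfDualPoset.

Theorem corollary5p14 (d : Order.disp_t) (P : finPOrderType d) (kappa : P -> P)
  (kappa_invol : forall x, kappa (kappa x) = x)
  (kappa_rev : forall x y, (x <= y)%O -> (kappa y <= kappa x)%O)
  (I : {set P}) (HI : is_order_ideal I) (l : P) :
  let I' := ideal_gen (kappa @: maxs I) in
  (forall O : {set {set P}}, is_rorbit O -> I \in O -> I' \in O ->
     chi_diff_sum l (kappa l) O = 0%R) /\
  (forall O O' : {set {set P}}, is_rorbit O -> is_rorbit O' ->
     I \in O -> I' \in O' -> O != O' ->
     #|O| = #|O'| /\ (chi_diff_sum l (kappa l) O + chi_diff_sum l (kappa l) O' = 0)%R).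
Proof.
rewrite /= -/(dual_ideal kappa I).
have orbitI' := dual_ideal_rorbit kappa_invol kappa_rev HI.
have ideals_orbitI := rorbit_order_ideal HI.
have sum_orbitI' := chi_diff_sum_dual_ideal kappa_invol kappa_rev l ideals_orbitI.
rewrite orbitI' in sum_orbitI'.
split=> [O orbO IO I'O | O O' orbO orbO' IO I'O' _].
  move/eqP: sum_orbitI'; rewrite -(is_rorbitE orbO IO) -(is_rorbitE orbO I'O).
  by rewrite -addr_eq0 -mulr2n mulrn_eq0 => /eqP.
rewrite (is_rorbitE orbO IO) (is_rorbitE orbO' I'O') sum_orbitI' addrN.
by rewrite -orbitI' card_dual_ideal_imset.
Qed.
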